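(* Let $d\ge2$ be even, let $K^\infty(t)=\frac{1}{2\pi}t(\pi-\arccos t)$, and for integers $k\ge0$ define $$a_k^d=V_d\int_{-1}^1K^\infty(t)\,P_{k,d}(t)\,(1-t^2)^{\frac{d-2}{2}}\,dt,\qquad V_d=\frac{\pi^{d/2}}{\Gamma(\frac d2+1)}.$$ Set $p=k+\frac{d-2}{2}$, $$C_1(d,k)=\frac{\pi^{d/2}}{d/2}\,\frac{(-1)^k}{2^k}\,\frac{1}{\Gamma(k+\frac d2)},\qquad C_2(q,d,k)=(-1)^q\binom{p}{q}\frac{(2q)!}{(2q-k)!}.$$ Then $$a_k^d=\begin{cases}C_1(d,0)\,\frac{1}{d\,2^{d+1}}\binom{d}{d/2}, & k=0,\\[2pt] C_1(d,1)\sum_{q=1}^{p}C_2(q,d,1)\,\frac{1}{2(2q+1)}, & k=1,\\[2pt] C_1(d,k)\sum_{q=\lceil k/2\rceil}^{p}C_2(q,d,k)\,\frac{1}{2(2q-k+2)}\Big(1-\frac{1}{2^{2q-k+2}}\binom{2q-k+2}{\frac{2q-k+2}{2}}\Big), & k\ge2\text{ even},\\[2pt] 0,& k\ge3\text{ odd}.\end{cases}$$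
   Context: $P_{k,d}$ is the Gegenbauer polynomial (zonal harmonic of degree $k$ on $\mathbb{S}^d\subset\mathbb{R}^{d+1}$): $P_{k,d}(t)=\frac{(-1)^k}{2^k}\frac{\Gamma(\frac d2)}{\Gamma(k+\frac d2)}\frac{1}{(1-t^2)^{\frac{d-2}{2}}}\frac{d^k}{dt^k}(1-t^2)^{k+\frac{d-2}{2}}$. By the Funk–Hecke theorem, $a_k^d$ is (up to the fixed normalizing constant $V_d$, which is independent of $k$) the eigenvalue of convolution on $\mathbb{S}^d$ with $K^\infty$ on spherical harmonics of degree $k$. $\binom{p}{q}=0$ when $q>p$. *)

From Stdlib Require Import Reals Lra Lia Arith List.
Open Scope R_scope.

Definition Kinf (t : R) : R := / (2 * PI) * t * (PI - acos t).

Inductive nth_deriv : nat -> (R -> R) -> (R -> R) -> Prop :=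
| nth_deriv_O : forall f, nth_deriv O f f
| nth_deriv_S : forall n f h g,
    (forall x, derivable_pt_lim f x (h x)) -> nth_deriv n h g ->
    nth_deriv (S n) f g.

(* sum_{i=a}^{b} f i  (empty if b < a) *)
Definition sumR (a b : nat) (f : nat -> R) : R :=
  fold_right Rplus 0 (map f (seq a (S b - a))).

(* For d even, d/2 is an integer, so Gamma(d/2+1) = (d/2)!,
   Gamma(d/2) = (d/2 - 1)!, Gamma(k + d/2) = (k + d/2 - 1)!. *)

Definition Vd (d : nat) : R := PI ^ (d / 2) / INR (fact (d / 2)).

(* The Gegenbauer polynomial P_{k,d}, given Dk = d^k/dt^k (1-t^2)^{k+(d-2)/2} *)
Definition Pkd (d k : nat) (Dk : R -> R) (t : R) : R :=
  (-1) ^ k / 2 ^ k * (INR (fact (d / 2 - 1)) / INR (fact (k + d / 2 - 1)))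
  * / (1 - t ^ 2) ^ ((d - 2) / 2) * Dk t.

Definition akd_integrand (d k : nat) (Dk : R -> R) (t : R) : R :=
  Kinf t * Pkd d k Dk t * (1 - t ^ 2) ^ ((d - 2) / 2).

Definition pp (d k : nat) : nat := (k + (d - 2) / 2)%nat.

Definition C1 (d k : nat) : R :=
  PI ^ (d / 2) / INR (d / 2) * ((-1) ^ k / 2 ^ k) * / INR (fact (k + d / 2 - 1)).

Definition C2 (q d k : nat) : R :=
  (-1) ^ q * C (pp d k) q * (INR (fact (2 * q)) / INR (fact (2 * q - k))).

Definition akd_formula (d k : nat) : R :=
  if Nat.eqb k 0 then
    C1 d 0 * (/ (INR d * 2 ^ (d + 1))) * C d (d / 2)
  else if Nat.eqb k 1 then
    C1 d 1 * sumR 1 (pp d 1) (fun q => C2 q d 1 * / (2 * INR (2 * q + 1)))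
  else if Nat.even k then
    C1 d k * sumR ((k + 1) / 2) (pp d k) (fun q =>
      C2 q d k * / (2 * INR (2 * q - k + 2)) *
      (1 - / 2 ^ (2 * q - k + 2) * C (2 * q - k + 2) ((2 * q - k + 2) / 2)))
  else 0.

From Pilot Require Import Defs.
From Stdlib Require Import Reals Lra Lia Arith List FunctionalExtensionality.
From Coquelicot Require Import Coquelicot.
Open Scope R_scope.

(* Expanding [(1 - t^2)^p] binomially, its [k]-th derivative is
   [sum_q (-1)^q C(p,q) (2q)!/(2q-k)! t^(2q-k)], and the weight [(1 - t^2)^((d-2)/2)] cancels the
   one in [P_{k,d}], so [a_k^d] is a binomial combination of the moments [int_{-1}^1 K(t) t^m dt].
   Under [t = cos th] one has [K(cos th) = (PI - th) cos th / (2 PI)], and one integration by parts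
   of the affine factor turns the [m]-th moment into [(PI - W_(m+2)) / (2 PI (m+2))] with the
   Wallis integral [W_n = int_0^PI cos^n], which is [0] for [n] odd and [PI C(n, n/2) / 2^n] for
   [n] even; this gives the cases [k = 1] and [k] even ([k = 0] is the same computation applied to
   [(1 - t^2)^p] itself, with [sin] in place of [cos]). For odd [k >= 3] the [q]-th term is a
   polynomial of degree [k - 1 < p] in [q], which the alternating binomial sum of order [p]
   annihilates. *)

(** * Derivatives of (1 - t^2)^p *)

Fixpoint falling (n j : nat) : nat :=
  match j with O => 1%nat | S j => (falling n j * (n - j))%nat end.

Lemma falling_lt n j : (n < j)%nat -> falling n j = 0%nat.
Proof.
  induction j as [|j IH]; intros H; [lia|]. simpl.
  destruct (Nat.eq_dec n j) as [->|Hne].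
  - rewrite Nat.sub_diag. lia.
  - rewrite IH by lia. lia.
Qed.

Lemma falling_S_INR n j : INR (falling n (S j)) = INR (falling n j) * (INR n - INR j).
Proof.
  simpl falling. rewrite mult_INR. destruct (le_lt_dec j n) as [H|H].
  - rewrite minus_INR by lia. reflexivity.
  - rewrite falling_lt by lia. simpl. ring.
Qed.

Lemma falling_fact n k : (k <= n)%nat -> INR (falling n k) = INR (fact n) / INR (fact (n - k)).
Proof.
  intros Hk. apply (Rmult_eq_reg_r (INR (fact (n - k)))); [|apply INR_fact_neq_0].
  unfold Rdiv. rewrite Rmult_assoc, Rinv_l, Rmult_1_r by apply INR_fact_neq_0.
  rewrite <- mult_INR. f_equal. induction k as [|k IH].
  - rewrite Nat.sub_0_r. simpl. lia.
  - replace (n - k)%nat with (S (n - S k)) in IH by lia. simpl falling.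
    rewrite <- IH by lia. rewrite fact_simpl. replace (S (n - S k)) with (n - k)%nat by lia. ring.
Qed.

Definition one_minus_sq_pow_deriv (p j : nat) (t : R) : R :=
  sum_f_R0 (fun q => (-1) ^ q * Binomial.C p q * INR (falling (2 * q) j) * t ^ (2 * q - j)) p.

Lemma derivable_pt_lim_sum_f_R0 (F dF : nat -> R -> R) (x : R) (n : nat) :
  (forall q, derivable_pt_lim (F q) x (dF q x)) ->
  derivable_pt_lim (fun t => sum_f_R0 (fun q => F q t) n) x (sum_f_R0 (fun q => dF q x) n).
Proof.
  intros H. induction n as [|n IH]; simpl; [apply H|].
  apply (derivable_pt_lim_plus (fun t => sum_f_R0 (fun q => F q t) n) (F (S n))); auto.
Qed.

Lemma derivable_pt_lim_one_minus_sq_pow_deriv p j x :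
  derivable_pt_lim (one_minus_sq_pow_deriv p j) x (one_minus_sq_pow_deriv p (S j) x).
Proof.
  apply (derivable_pt_lim_sum_f_R0
    (fun q t => (-1) ^ q * Binomial.C p q * INR (falling (2 * q) j) * t ^ (2 * q - j))
    (fun q t => (-1) ^ q * Binomial.C p q * INR (falling (2 * q) (S j)) * t ^ (2 * q - S j))).
  intros q.
  replace ((-1) ^ q * Binomial.C p q * INR (falling (2 * q) (S j)) * x ^ (2 * q - S j))
    with ((-1) ^ q * Binomial.C p q * INR (falling (2 * q) j)
          * (INR (2 * q - j) * x ^ pred (2 * q - j))).
  - apply (derivable_pt_lim_scal (fun t => t ^ (2 * q - j))), derivable_pt_lim_pow.
  - change (falling (2 * q) (S j)) with (falling (2 * q) j * (2 * q - j))%nat.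
    rewrite mult_INR. replace (pred (2 * q - j)) with (2 * q - S j)%nat by lia. ring.
Qed.

Lemma nth_deriv_one_minus_sq_pow_deriv p j m :
  nth_deriv m (one_minus_sq_pow_deriv p j) (one_minus_sq_pow_deriv p (j + m)).
Proof.
  revert j. induction m as [|m IH]; intros j.
  - rewrite Nat.add_0_r. constructor.
  - apply nth_deriv_S with (h := one_minus_sq_pow_deriv p (S j)).
    + intros x. apply derivable_pt_lim_one_minus_sq_pow_deriv.
    + rewrite <- Nat.add_succ_comm. apply IH.
Qed.

Lemma one_minus_sq_pow_deriv_0 p : one_minus_sq_pow_deriv p 0 = fun t => (1 - t ^ 2) ^ p.
Proof.
  apply functional_extensionality. intros t. unfold one_minus_sq_pow_deriv.
  replace (1 - t ^ 2) with (-1 * t ^ 2 + 1) by ring.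
  rewrite binomial. apply sum_eq. intros i _.
  rewrite pow1, Nat.sub_0_r, Rpow_mult_distr, pow_mult. simpl. ring.
Qed.

(** * Continuity of arccos *)

Lemma acos_ge_1 x : 1 <= x -> acos x = 0.
Proof. intros H. unfold acos. destruct (Rle_dec x (-1)); [lra|]. destruct (Rle_dec 1 x); lra. Qed.

Lemma acos_le_m1 x : x <= -1 -> acos x = PI.
Proof. intros H. unfold acos. destruct (Rle_dec x (-1)); lra. Qed.

Lemma acos_antimonotone x y : x <= y -> acos y <= acos x.
Proof.
  intros Hxy. pose proof (acos_bound x) as Bx. pose proof (acos_bound y) as By.
  destruct (Rle_dec x (-1)) as [Hx|Hx]; [rewrite (acos_le_m1 x Hx); lra|].
  destruct (Rle_dec 1 y) as [Hy|Hy]; [rewrite (acos_ge_1 y Hy); lra|].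
  destruct (Rle_dec (acos y) (acos x)) as [H|H]; [exact H|exfalso].
  assert (Hc : cos (acos y) < cos (acos x)) by (apply cos_decreasing_1; lra).
  rewrite !cos_acos in Hc; lra.
Qed.

Lemma acos_le_of_cos_le th x : 0 <= th <= PI -> cos th <= x -> acos x <= th.
Proof. intros Hth Hx. rewrite <- (acos_cos th Hth). now apply acos_antimonotone. Qed.

Lemma acos_ge_of_le_cos th x : 0 <= th <= PI -> x <= cos th -> th <= acos x.
Proof. intros Hth Hx. rewrite <- (acos_cos th Hth). now apply acos_antimonotone. Qed.

Lemma continuity_pt_acos x0 : continuity_pt acos x0.
Proof.
  intros eps Heps. set (a := acos x0). assert (Ha := acos_bound x0). fold a in Ha.
  assert (Hup : exists d1, d1 > 0 /\ forall x, Rabs (x - x0) < d1 -> acos x <= a + eps / 2).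
  { destruct (Rle_dec PI (a + eps / 2)) as [h|h].
    - exists 1. split; [lra|]. intros x _. pose proof (acos_bound x). lra.
    - assert (Hu : cos (a + eps / 2) < x0).
      { apply Rnot_le_lt. intros Hx0.
        assert (Hc : a + eps / 2 <= acos x0) by (apply acos_ge_of_le_cos; lra). fold a in Hc. lra. }
      exists (x0 - cos (a + eps / 2)). split; [lra|]. intros x Hx. apply Rabs_def2 in Hx.
      apply acos_le_of_cos_le; lra. }
  assert (Hlo : exists d2, d2 > 0 /\ forall x, Rabs (x - x0) < d2 -> a - eps / 2 <= acos x).
  { destruct (Rle_dec (a - eps / 2) 0) as [h|h].
    - exists 1. split; [lra|]. intros x _. pose proof (acos_bound x). lra.
    - assert (Hv : x0 < cos (a - eps / 2)).
      { apply Rnot_le_lt. intros Hx0.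
        assert (Hc : acos x0 <= a - eps / 2) by (apply acos_le_of_cos_le; lra). fold a in Hc. lra. }
      exists (cos (a - eps / 2) - x0). split; [lra|]. intros x Hx. apply Rabs_def2 in Hx.
      apply acos_ge_of_le_cos; lra. }
  destruct Hup as [d1 [Hd1 H1]], Hlo as [d2 [Hd2 H2]].
  exists (Rmin d1 d2). split; [apply Rmin_pos; lra|].
  intros x [_ Hx]. simpl in *. unfold R_dist in *.
  specialize (H1 x (Rlt_le_trans _ _ _ Hx (Rmin_l _ _))).
  specialize (H2 x (Rlt_le_trans _ _ _ Hx (Rmin_r _ _))).
  apply Rabs_def1; lra.
Qed.

Lemma is_RInt_derive_R (F f : R -> R) a b :
  (forall x, is_derive F x (f x)) -> (forall x, continuous f x) -> is_RInt f a b (F b - F a).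
Proof. intros HF Hf. apply (is_RInt_derive (V := R_CompleteNormedModule)); auto. Qed.

Lemma is_RInt_RInt_R (f : R -> R) a b : (forall x, continuous f x) -> is_RInt f a b (RInt f a b).
Proof.
  intros Hf. apply (RInt_correct (V := R_CompleteNormedModule)).
  apply (ex_RInt_continuous (V := R_CompleteNormedModule)). auto.
Qed.

Lemma is_RInt_lincomb (f g : R -> R) a b u v (cf cg : R) :
  is_RInt f a b u -> is_RInt g a b v ->
  is_RInt (fun x => cf * f x + cg * g x) a b (cf * u + cg * v).
Proof.
  intros Hf Hg. apply (is_RInt_plus (V := R_NormedModule) (fun x => cf * f x) (fun x => cg * g x)).
  - apply (is_RInt_scal (V := R_NormedModule) f a b cf u Hf).
  - apply (is_RInt_scal (V := R_NormedModule) g a b cg v Hg).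
Qed.

Lemma is_RInt_sum_f_R0 (F : nat -> R -> R) (v : nat -> R) a b n :
  (forall q, is_RInt (F q) a b (v q)) ->
  is_RInt (fun t => sum_f_R0 (fun q => F q t) n) a b (sum_f_R0 v n).
Proof.
  intros H. induction n as [|n IH]; simpl; [apply H|].
  apply (is_RInt_plus (V := R_NormedModule) _ (F (S n)) a b _ _ IH (H (S n))).
Qed.

Lemma ex_derive_continuous_R (f : R -> R) x : ex_derive f x -> continuous f x.
Proof. apply (ex_derive_continuous (V := R_NormedModule)). Qed.

(** * Wallis integrals *)

Definition wallis (n : nat) : R := Binomial.C (2 * n) n / 2 ^ (2 * n).

Lemma wallis_S n : (INR (2 * n) + 2) * wallis (S n) = (INR (2 * n) + 1) * wallis n.
Proof.
  unfold wallis, Binomial.C.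
  replace (2 * S n)%nat with (S (S (2 * n))) by lia.
  replace (S (S (2 * n)) - S n)%nat with (S n) by lia.
  replace (2 * n - n)%nat with n by lia.
  rewrite !fact_simpl, !mult_INR, !S_INR. simpl pow.
  assert (H1 := INR_fact_neq_0 n). assert (H2 := INR_fact_neq_0 (2 * n)).
  assert (H3 : INR n + 1 <> 0) by (pose proof (pos_INR n); lra).
  assert (H4 := pow_nonzero 2 (2 * n) ltac:(lra)).
  rewrite mult_INR. simpl INR. field. repeat split; auto.
Qed.

Section PowerReduction.

Variables (g g' : R -> R) (a b : R).
Hypothesis g_derive : forall x, is_derive g x (g' x).
Hypothesis g'_derive : forall x, is_derive g' x (- g x).
Hypothesis g_pythagoras : forall x, g x ^ 2 + g' x ^ 2 = 1.

Lemma continuous_pow_fun n x : continuous (fun y => g y ^ n) x.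
Proof.
  apply ex_derive_continuous_R. eexists. apply (is_derive_pow g n x (g' x)), g_derive.
Qed.

(* Differentiating [g' g^(n+1)] gives [(n+1) g^n - (n+2) g^(n+2)], using [g'^2 = 1 - g^2]. *)
Lemma RInt_pow_reduction n :
  g' b * g b ^ S n = g' a * g a ^ S n ->
  (INR n + 2) * RInt (fun x => g x ^ S (S n)) a b = (INR n + 1) * RInt (fun x => g x ^ n) a b.
Proof.
  intros Hbnd.
  set (D := fun x => (- (INR n + 2)) * g x ^ S (S n) + (INR n + 1) * g x ^ n).
  assert (H0 : is_RInt D a b 0).
  { replace 0 with (g' b * g b ^ S n - g' a * g a ^ S n) by lra.
    apply (is_RInt_derive_R (fun x => g' x * g x ^ S n)).
    - intros x.
      assert (Hd := is_derive_mult g' (fun y => g y ^ S n) x _ _ (g'_derive x)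
        (is_derive_pow g (S n) x _ (g_derive x)) Rmult_comm).
      replace (D x) with (- g x * g x ^ S n + g' x * (INR (S n) * g' x * g x ^ pred (S n)));
        [exact Hd|].
      assert (E : g' x * g' x = 1 - g x * g x) by (specialize (g_pythagoras x); simpl in *; lra).
      unfold D. rewrite S_INR. simpl.
      replace (g' x * ((INR n + 1) * g' x * g x ^ n)) with ((INR n + 1) * g x ^ n * (g' x * g' x))
        by ring.
      rewrite E. ring.
    - intros x. apply (continuous_plus (V := R_NormedModule));
        apply (continuous_scal_r (K := R_AbsRing) (V := R_NormedModule)), continuous_pow_fun. }
  pose proof (is_RInt_lincomb _ _ a b _ _ (- (INR n + 2)) (INR n + 1)
    (is_RInt_RInt_R _ a b (continuous_pow_fun (S (S n))))
    (is_RInt_RInt_R _ a b (continuous_pow_fun n))) as Hlc.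
  change (is_RInt D a b (- (INR n + 2) * RInt (fun x => g x ^ S (S n)) a b
    + (INR n + 1) * RInt (fun x => g x ^ n) a b)) in Hlc.
  pose proof (is_RInt_unique _ _ _ _ H0) as E. rewrite (is_RInt_unique _ _ _ _ Hlc) in E. lra.
Qed.

Hypothesis g_boundary : forall n, g' b * g b ^ S n = g' a * g a ^ S n.

Lemma RInt_pow_even n : RInt (fun x => g x ^ (2 * n)) a b = (b - a) * wallis n.
Proof.
  induction n as [|n IH].
  - change (RInt (fun _ => 1) a b = (b - a) * wallis 0).
    rewrite (is_RInt_unique _ a b _ (is_RInt_const a b 1)).
    unfold wallis, Binomial.C. simpl. change (scal (b - a) 1) with ((b - a) * 1). field.
  - replace (2 * S n)%nat with (S (S (2 * n))) by lia.
    assert (Hp : INR (2 * n) + 2 <> 0) by (pose proof (pos_INR (2 * n)); lra).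
    apply (Rmult_eq_reg_l (INR (2 * n) + 2)); [|exact Hp].
    rewrite RInt_pow_reduction, IH by apply g_boundary.
    transitivity ((b - a) * ((INR (2 * n) + 2) * wallis (S n))); [rewrite wallis_S|]; ring.
Qed.

Lemma RInt_pow_odd n : RInt g a b = 0 -> RInt (fun x => g x ^ (2 * n + 1)) a b = 0.
Proof.
  intros H1. induction n as [|n IH].
  - rewrite <- H1. apply RInt_ext. intros x _. simpl. ring.
  - replace (2 * S n + 1)%nat with (S (S (2 * n + 1))) by lia.
    assert (Hp : INR (2 * n + 1) + 2 <> 0) by (pose proof (pos_INR (2 * n + 1)); lra).
    apply (Rmult_eq_reg_l (INR (2 * n + 1) + 2)); [|exact Hp].
    rewrite RInt_pow_reduction, IH by apply g_boundary. ring.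
Qed.

End PowerReduction.

Lemma is_derive_opp_sin x : is_derive (fun y => - sin y) x (- cos x).
Proof. auto_derive; auto. ring. Qed.

Lemma RInt_cos_pow_even n : RInt (fun x => cos x ^ (2 * n)) 0 PI = PI * wallis n.
Proof.
  rewrite (RInt_pow_even cos (fun y => - sin y));
    [now rewrite Rminus_0_r|apply is_derive_cos|apply is_derive_opp_sin| |].
  - intros x. pose proof (sin2_cos2 x). unfold Rsqr in *. simpl. lra.
  - intros n'. rewrite sin_0, sin_PI. ring.
Qed.

Lemma RInt_cos_pow_odd n : RInt (fun x => cos x ^ (2 * n + 1)) 0 PI = 0.
Proof.
  apply (RInt_pow_odd cos (fun y => - sin y)); [apply is_derive_cos|apply is_derive_opp_sin| | |].
  - intros x. pose proof (sin2_cos2 x). unfold Rsqr in *. simpl. lra.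
  - intros n'. rewrite sin_0, sin_PI. ring.
  - rewrite (is_RInt_unique _ 0 PI _ (is_RInt_derive_R sin cos 0 PI is_derive_sin
      (fun x => ex_derive_continuous_R cos x (ex_intro _ _ (is_derive_cos x))))).
    rewrite sin_0, sin_PI. apply Rminus_0_r.
Qed.

Lemma RInt_sin_pow_even n : RInt (fun x => sin x ^ (2 * n)) 0 PI = PI * wallis n.
Proof.
  rewrite (RInt_pow_even sin cos);
    [now rewrite Rminus_0_r|apply is_derive_sin|apply is_derive_cos| |].
  - intros x. pose proof (sin2_cos2 x). unfold Rsqr in *. simpl. lra.
  - intros n'. rewrite sin_0, sin_PI. simpl. ring.
Qed.

(** * Integrals against K^infty *)

Lemma Kinf_cos th : 0 <= th <= PI -> Kinf (cos th) = / (2 * PI) * (PI - th) * cos th.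
Proof. intros Hth. unfold Kinf. rewrite acos_cos by exact Hth. ring. Qed.

Lemma continuous_Kinf t : continuous Kinf t.
Proof.
  apply (continuous_mult (fun t => / (2 * PI) * t) (fun t => PI - acos t)).
  - apply ex_derive_continuous_R. auto_derive. auto.
  - apply (continuous_minus (fun _ => PI) acos); [apply continuous_const|].
    apply continuity_pt_filterlim, continuity_pt_acos.
Qed.

Lemma is_RInt_Kinf_subst (g : R -> R) : (forall t, continuous g t) ->
  is_RInt (fun t => Kinf t * g t) (-1) 1
    (RInt (fun th => / (2 * PI) * (PI - th) * (sin th * cos th * g (cos th))) 0 PI).
Proof.
  intros Hg. pose proof PI_RGT_0 as HPI.
  assert (Hf : forall t, continuous (fun t => Kinf t * g t) t).
  { intros t. apply (continuous_mult Kinf g); [apply continuous_Kinf|apply Hg]. }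
  assert (H := is_RInt_comp (V := R_CompleteNormedModule) (fun t => Kinf t * g t) cos
    (fun y => - sin y) 0 PI (fun x _ => Hf (cos x))).
  rewrite cos_0, cos_PI in H.
  replace (RInt _ 0 PI) with (RInt (fun t => Kinf t * g t) (-1) 1).
  - apply is_RInt_RInt_R, Hf.
  - rewrite <- opp_RInt_swap by (apply (ex_RInt_continuous (V := R_CompleteNormedModule)); auto).
    symmetry. apply is_RInt_unique.
    apply (is_RInt_ext (fun th => opp (scal (- sin th) (Kinf (cos th) * g (cos th))))).
    + intros th Hth. rewrite Rmin_left, Rmax_right in Hth by lra.
      rewrite Kinf_cos by lra. change (- (- sin th * (/ (2 * PI) * (PI - th) * cos th * g (cos th)))
        = / (2 * PI) * (PI - th) * (sin th * cos th * g (cos th))). ring.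
    + apply (is_RInt_opp (V := R_NormedModule)), H.
      intros x _. split; [apply is_derive_cos|].
      apply ex_derive_continuous_R. auto_derive. auto.
Qed.

Lemma is_RInt_by_parts_PI (F f : R -> R) (IF : R) :
  (forall x, is_derive F x (f x)) -> (forall x, continuous f x) -> is_RInt F 0 PI IF ->
  is_RInt (fun x => / (2 * PI) * (PI - x) * f x) 0 PI (- F 0 / 2 + IF / (2 * PI)).
Proof.
  intros HF Hf HIF. pose proof PI_RGT_0 as HPI.
  set (G := fun x => / (2 * PI) * (PI - x) * F x).
  assert (HG : is_RInt (fun x => / (2 * PI) * (PI - x) * f x + - / (2 * PI) * F x) 0 PI
                 (G PI - G 0)).
  { apply is_RInt_derive_R.
    - intros x. unfold G.
      replace (/ (2 * PI) * (PI - x) * f x + - / (2 * PI) * F x)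
        with (- / (2 * PI) * F x + / (2 * PI) * (PI - x) * f x) by ring.
      apply (is_derive_mult (fun x => / (2 * PI) * (PI - x)) F); [|apply HF|apply Rmult_comm].
      auto_derive; auto. ring.
    - intros x. apply (continuous_plus (V := R_NormedModule));
        apply (continuous_mult (K := R_AbsRing)); auto; try apply continuous_const;
        try (intros; apply ex_derive_continuous_R; eexists; apply HF).
      apply ex_derive_continuous_R. auto_derive. auto. }
  pose proof (is_RInt_lincomb _ _ 0 PI _ _ 1 (/ (2 * PI)) HG HIF) as H.
  unfold G in H. rewrite Rminus_diag, Rmult_0_r, Rmult_0_l, Rminus_0_r in H.
  replace (- F 0 / 2 + IF / (2 * PI))
    with (1 * (0 - / (2 * PI) * PI * F 0) + / (2 * PI) * IF) by (field; lra).
  refine (is_RInt_ext _ _ 0 PI _ (fun x _ => _) H). cbv beta.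
  change (?a = ?b) with (@eq R a b). ring.
Qed.

(* After [t = cos th], [Kinf] becomes [(PI - th) cos th / (2 PI)]; integrating the affine factor
   by parts leaves [F], an antiderivative of [sin th cos th g (cos th)]. *)
Lemma is_RInt_Kinf_mul (g F : R -> R) (IF : R) :
  (forall t, continuous g t) -> (forall th, is_derive F th (sin th * cos th * g (cos th))) ->
  is_RInt F 0 PI IF -> is_RInt (fun t => Kinf t * g t) (-1) 1 (- F 0 / 2 + IF / (2 * PI)).
Proof.
  intros Hg HF HIF.
  assert (Hf : forall th, continuous (fun th => sin th * cos th * g (cos th)) th).
  { intros th. apply (continuous_mult (K := R_AbsRing)).
    - apply ex_derive_continuous_R. auto_derive. auto.
    - apply (continuous_comp cos g); [|apply Hg].
      apply ex_derive_continuous_R. auto_derive. auto. }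
  rewrite <- (is_RInt_unique _ _ _ _ (is_RInt_by_parts_PI F _ IF HF Hf HIF)).
  apply is_RInt_Kinf_subst, Hg.
Qed.

Definition Kmoment (m : nat) : R :=
  (PI - RInt (fun x => cos x ^ (m + 2)) 0 PI) / (2 * PI * (INR m + 2)).

Lemma is_RInt_Kinf_pow m : is_RInt (fun t => Kinf t * t ^ m) (-1) 1 (Kmoment m).
Proof.
  assert (Hm : INR m + 2 <> 0) by (pose proof (pos_INR m); lra).
  pose proof PI_RGT_0 as HPI.
  set (W := RInt (fun x => cos x ^ (m + 2)) 0 PI).
  replace (Kmoment m) with (- (- / (INR m + 2) * cos 0 ^ (m + 2)) / 2
                            + - / (INR m + 2) * W / (2 * PI)).
  - apply (is_RInt_Kinf_mul (fun t => t ^ m) (fun x => - / (INR m + 2) * cos x ^ (m + 2))).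
    + intros t. apply ex_derive_continuous_R. auto_derive. auto.
    + intros th. auto_derive; auto.
      replace (m + 2)%nat with (S (S m)) by lia. rewrite !S_INR. simpl. field. exact Hm.
    + apply (is_RInt_scal (V := R_NormedModule)), is_RInt_RInt_R. intros x.
      apply ex_derive_continuous_R. auto_derive. auto.
  - unfold Kmoment. fold W. rewrite cos_0, pow1. field. lra.
Qed.

Lemma Kmoment_odd s : Kmoment (2 * s + 1) = / (2 * INR (2 * s + 3)).
Proof.
  unfold Kmoment. replace (2 * s + 1 + 2)%nat with (2 * S s + 1)%nat by lia.
  rewrite RInt_cos_pow_odd.
  replace (INR (2 * s + 1) + 2) with (INR (2 * s + 3)) by (rewrite !plus_INR; simpl; ring).
  pose proof PI_RGT_0. assert (INR (2 * s + 3) <> 0) by (apply not_0_INR; lia).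
  field. lra.
Qed.

Lemma Kmoment_even s : Kmoment (2 * s) = / (2 * INR (2 * s + 2)) * (1 - wallis (S s)).
Proof.
  unfold Kmoment. replace (2 * s + 2)%nat with (2 * S s)%nat by lia.
  rewrite RInt_cos_pow_even.
  replace (INR (2 * s) + 2) with (INR (2 * S s))
    by (rewrite !mult_INR, (S_INR s); simpl (INR 2); ring).
  pose proof PI_RGT_0. assert (INR (2 * S s) <> 0) by (apply not_0_INR; lia).
  field. lra.
Qed.

Lemma is_derive_pow_primitive (g g' : R -> R) n x :
  is_derive g x (g' x) -> is_derive (fun y => / INR (S n) * g y ^ S n) x (g' x * g x ^ n).
Proof.
  intros Hg. assert (Hn : INR (S n) <> 0) by (apply not_0_INR; lia).
  replace (g' x * g x ^ n) with (/ INR (S n) * (INR (S n) * g' x * g x ^ pred (S n)))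
    by (simpl pred; field; exact Hn).
  apply (is_derive_scal (fun y => g y ^ S n)), is_derive_pow, Hg.
Qed.

Lemma is_RInt_Kinf_one_minus_sq_pow p :
  is_RInt (fun t => Kinf t * (1 - t ^ 2) ^ p) (-1) 1 (wallis (S p) / (4 * INR (S p))).
Proof.
  assert (Hp : INR (S (2 * p + 1)) <> 0) by (apply not_0_INR; lia).
  assert (Hn : (S (2 * p + 1) = 2 * S p)%nat) by lia.
  pose proof PI_RGT_0 as HPI.
  replace (wallis (S p) / (4 * INR (S p))) with
    (- (/ INR (S (2 * p + 1)) * sin 0 ^ S (2 * p + 1)) / 2
     + / INR (S (2 * p + 1)) * (PI * wallis (S p)) / (2 * PI)).
  - apply (is_RInt_Kinf_mul _ (fun x => / INR (S (2 * p + 1)) * sin x ^ S (2 * p + 1))).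
    + intros t. apply ex_derive_continuous_R. auto_derive. auto.
    + intros th.
      replace (sin th * cos th * (1 - cos th ^ 2) ^ p) with (cos th * sin th ^ (2 * p + 1)).
      * apply is_derive_pow_primitive, is_derive_sin.
      * rewrite pow_add, pow_mult. pose proof (sin2_cos2 th) as E. unfold Rsqr in E.
        replace (1 - cos th ^ 2) with (sin th ^ 2) by (simpl; lra). ring.
    + apply (is_RInt_scal (V := R_NormedModule)). rewrite Hn, <- RInt_sin_pow_even.
      apply is_RInt_RInt_R. intros x. apply ex_derive_continuous_R. auto_derive. auto.
  - assert (HSp : INR (S p) <> 0) by (apply not_0_INR; lia).
    rewrite sin_0, pow_i, Hn, mult_INR by lia. change (INR 2) with 2. field. lra.
Qed.

(** * Alternating binomial sums *)

(* Unlike [Binomial.C], [binom n k] vanishes for [k > n], so Pascal's rule holds unconditionally. *)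
Fixpoint binom (n k : nat) : R :=
  match n, k with
  | _, O => 1
  | O, S _ => 0
  | S n, S k => binom n k + binom n (S k)
  end.

Lemma binom_0_r n : binom n 0 = 1.
Proof. destruct n; reflexivity. Qed.

Lemma binom_gt n k : (n < k)%nat -> binom n k = 0.
Proof.
  revert k. induction n as [|n IH]; intros k Hk; destruct k as [|k]; try lia; simpl; auto.
  rewrite !IH by lia. ring.
Qed.

Lemma binom_C n k : (k <= n)%nat -> binom n k = Binomial.C n k.
Proof.
  revert k. induction n as [|n IH]; intros k Hk.
  - replace k with 0%nat by lia. unfold Binomial.C. simpl. field.
  - destruct k as [|k].
    + unfold Binomial.C. rewrite binom_0_r, Nat.sub_0_r. simpl (fact 0). simpl (INR 1).
      field. apply INR_fact_neq_0.
    + simpl binom. destruct (Nat.eq_dec k n) as [->|Hne].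
      * rewrite (binom_gt n (S n)), IH by lia.
        unfold Binomial.C. rewrite !Nat.sub_diag. field. repeat split; apply INR_fact_neq_0.
      * rewrite !IH by lia. apply pascal. lia.
Qed.

Definition fdiff (f : nat -> R) (q : nat) : R := f (S q) - f q.

(* [fdiff_null n f] says that [f] is a polynomial in [q] of degree less than [n]. *)
Fixpoint fdiff_null (n : nat) (f : nat -> R) : Prop :=
  match n with
  | O => forall q, f q = 0
  | S n => fdiff_null n (fdiff f)
  end.

Lemma fdiff_null_ext n f g : (forall q, f q = g q) -> fdiff_null n f -> fdiff_null n g.
Proof.
  revert f g. induction n as [|n IH]; intros f g E H; simpl in *.
  - intros q. rewrite <- E. auto.
  - eapply IH; [|exact H]. intros q. unfold fdiff. rewrite !E. reflexivity.
Qed.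

Lemma fdiff_null_plus n f g : fdiff_null n f -> fdiff_null n g -> fdiff_null n (fun q => f q + g q).
Proof.
  revert f g. induction n as [|n IH]; intros f g Hf Hg; simpl in *.
  - intros q. rewrite Hf, Hg. ring.
  - eapply fdiff_null_ext; [|apply (IH _ _ Hf Hg)]. intros q. unfold fdiff. ring.
Qed.

Lemma fdiff_null_scal n c f : fdiff_null n f -> fdiff_null n (fun q => c * f q).
Proof.
  revert f. induction n as [|n IH]; intros f Hf; simpl in *.
  - intros q. rewrite Hf. ring.
  - eapply fdiff_null_ext; [|apply (IH _ Hf)]. intros q. unfold fdiff. ring.
Qed.

Lemma fdiff_null_shift n f : fdiff_null n f -> fdiff_null n (fun q => f (S q)).
Proof.
  revert f. induction n as [|n IH]; intros f Hf; simpl in *; [intros q; apply Hf|].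
  apply (IH _ Hf).
Qed.

Lemma fdiff_null_S n f : fdiff_null n f -> fdiff_null (S n) f.
Proof.
  revert f. induction n as [|n IH]; intros f Hf; simpl in *.
  - intros q. unfold fdiff. rewrite !Hf. ring.
  - apply (IH (fdiff f) Hf).
Qed.

Lemma fdiff_null_le n m f : (n <= m)%nat -> fdiff_null n f -> fdiff_null m f.
Proof. intros H. induction H; auto using fdiff_null_S. Qed.

(* Discrete Leibniz rule: [fdiff ((a q + b) f) = (a q + b) fdiff f + a f (S q)]. *)
Lemma fdiff_null_mul_affine n a b f :
  fdiff_null n f -> fdiff_null (S n) (fun q => (a * INR q + b) * f q).
Proof.
  revert f. induction n as [|n IH]; intros f Hf.
  - simpl in *. intros q. unfold fdiff. rewrite !Hf. ring.
  - change (fdiff_null (S n) (fdiff (fun q => (a * INR q + b) * f q))).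
    eapply fdiff_null_ext;
      [|apply (fdiff_null_plus _ _ _ (IH (fdiff f) Hf)
                                    (fdiff_null_scal _ a _ (fdiff_null_shift _ _ Hf)))].
    intros q. unfold fdiff. rewrite S_INR. ring.
Qed.

Lemma fdiff_null_falling j : fdiff_null (S j) (fun q => INR (falling (2 * q) j)).
Proof.
  induction j as [|j IH]; [simpl; intros; unfold fdiff; ring|].
  eapply fdiff_null_ext; [|apply (fdiff_null_mul_affine _ 2 (- INR j) _ IH)].
  intros q. rewrite falling_S_INR, mult_INR. simpl (INR 2). ring.
Qed.

Lemma sum_f_R0_opp (a : nat -> R) n : sum_f_R0 (fun i => - a i) n = - sum_f_R0 a n.
Proof. induction n as [|n IH]; simpl; [ring|rewrite IH; ring]. Qed.

Definition alt_binom_sum (p : nat) (f : nat -> R) : R :=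
  sum_f_R0 (fun q => (-1) ^ q * binom p q * f q) p.

Lemma alt_binom_sum_S p f : alt_binom_sum (S p) f = - alt_binom_sum p (fdiff f).
Proof.
  unfold alt_binom_sum, fdiff.
  set (B := sum_f_R0 (fun i => (-1) ^ i * binom p i * f (S i)) p).
  set (Cc := sum_f_R0 (fun i => (-1) ^ S i * binom p (S i) * f (S i)) p).
  assert (E1 : sum_f_R0 (fun q => (-1) ^ q * binom (S p) q * f q) (S p) = f 0%nat + (- B + Cc)).
  { rewrite decomp_sum by lia. simpl pred. f_equal; [simpl; ring|].
    unfold B, Cc. rewrite <- sum_f_R0_opp, <- plus_sum. apply sum_eq. intros i _. simpl. ring. }
  assert (E2 : sum_f_R0 (fun q => (-1) ^ q * binom p q * f q) p = f 0%nat + Cc).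
  { transitivity (sum_f_R0 (fun q => (-1) ^ q * binom p q * f q) (S p)).
    - rewrite tech5, (binom_gt p (S p)) by lia. ring.
    - rewrite decomp_sum by lia. simpl pred. f_equal. rewrite binom_0_r. simpl. ring. }
  assert (E3 : sum_f_R0 (fun q => (-1) ^ q * binom p q * (f (S q) - f q)) p =
               B - sum_f_R0 (fun q => (-1) ^ q * binom p q * f q) p).
  { unfold B. rewrite <- minus_sum. apply sum_eq. intros; ring. }
  rewrite E1, E3, E2. ring.
Qed.

Lemma alt_binom_sum_fdiff_null p f : fdiff_null p f -> alt_binom_sum p f = 0.
Proof.
  revert f. induction p as [|p IH]; intros f H.
  - unfold alt_binom_sum. simpl. rewrite H. ring.
  - rewrite alt_binom_sum_S, IH; [ring|exact H].
Qed.

Lemma fold_right_Rplus_init (l : list R) x : fold_right Rplus x l = x + fold_right Rplus 0 l.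
Proof. induction l as [|a l IH]; simpl; [ring|rewrite IH; ring]. Qed.

Lemma sumR_0 (f : nat -> R) b : sumR 0 b f = sum_f_R0 f b.
Proof.
  unfold sumR. rewrite Nat.sub_0_r. induction b as [|b IH]; [simpl; ring|].
  rewrite seq_S, map_app, fold_right_app, fold_right_Rplus_init, IH. simpl. ring.
Qed.

Lemma fold_right_Rplus_map_null (g : nat -> R) l :
  (forall q, In q l -> g q = 0) -> fold_right Rplus 0 (map g l) = 0.
Proof.
  induction l as [|x l IH]; intros H; simpl; [reflexivity|].
  rewrite H, IH; [ring| |left; reflexivity]. intros q Hq. apply H. right. exact Hq.
Qed.

Lemma sumR_sum_f_R0 a b (f g : nat -> R) : (a <= S b)%nat ->
  (forall q, (q < a)%nat -> g q = 0) -> (forall q, (a <= q <= b)%nat -> g q = f q) ->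
  sumR a b f = sum_f_R0 g b.
Proof.
  intros Hab Hlow Hmid. rewrite <- sumR_0. unfold sumR. rewrite Nat.sub_0_r.
  replace (S b) with (a + (S b - a))%nat at 2 by lia.
  rewrite seq_app, map_app, fold_right_app, (fold_right_Rplus_init (map g (seq 0 a))).
  rewrite (fold_right_Rplus_map_null g (seq 0 a)), Rplus_0_r.
  - f_equal. apply map_ext_in. intros q Hq. apply in_seq in Hq. symmetry. apply Hmid. lia.
  - intros q Hq. apply in_seq in Hq. apply Hlow. lia.
Qed.

(** * The coefficients a_k^d *)

Definition moment_sum (p k : nat) : R :=
  sum_f_R0 (fun q => (-1) ^ q * Binomial.C p q * INR (falling (2 * q) k) * Kmoment (2 * q - k)) p.

Lemma is_RInt_Kinf_one_minus_sq_pow_deriv p k :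
  is_RInt (fun t => Kinf t * one_minus_sq_pow_deriv p k t) (-1) 1 (moment_sum p k).
Proof.
  eapply is_RInt_ext; [|apply (is_RInt_sum_f_R0 (fun q t =>
    (-1) ^ q * Binomial.C p q * INR (falling (2 * q) k) * (Kinf t * t ^ (2 * q - k))))].
  - intros t _. unfold one_minus_sq_pow_deriv. rewrite scal_sum. apply sum_eq. intros; ring.
  - intros q. apply (is_RInt_scal (V := R_NormedModule) (fun t => Kinf t * t ^ (2 * q - k))).
    apply is_RInt_Kinf_pow.
Qed.

Lemma half_double n : (2 * n / 2 = n)%nat.
Proof. rewrite Nat.mul_comm. apply Nat.div_mul. lia. Qed.

Lemma half_double_pred h : ((2 * S h - 2) / 2 = h)%nat.
Proof. replace (2 * S h - 2)%nat with (2 * h)%nat by lia. apply half_double. Qed.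

(* On [(-1, 1)] the weight [(1 - t^2)^((d-2)/2)] cancels the one in the denominator of [Pkd]. *)
Lemma akd_integrand_eq h k Dk t : -1 < t < 1 ->
  akd_integrand (2 * S h) k Dk t
  = (-1) ^ k / 2 ^ k * (INR (fact h) / INR (fact (k + h))) * (Kinf t * Dk t).
Proof.
  intros Ht. unfold akd_integrand, Pkd. rewrite half_double, half_double_pred.
  replace (S h - 1)%nat with h by lia. replace (k + S h - 1)%nat with (k + h)%nat by lia.
  assert (Hw : (1 - t ^ 2) ^ h <> 0) by (apply pow_nonzero; nra).
  field. repeat split; auto using INR_fact_neq_0, pow_nonzero; lra.
Qed.

Lemma Vd_normalization h k :
  Vd (2 * S h) * ((-1) ^ k / 2 ^ k * (INR (fact h) / INR (fact (k + h)))) = Defs.C1 (2 * S h) k.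
Proof.
  unfold Vd, Defs.C1. rewrite half_double. replace (k + S h - 1)%nat with (k + h)%nat by lia.
  rewrite fact_simpl, mult_INR. field.
  repeat split; auto using INR_fact_neq_0, pow_nonzero; try (apply not_0_INR; lia); lra.
Qed.

Lemma akd_of_is_RInt h k I :
  is_RInt (fun t => Kinf t * one_minus_sq_pow_deriv (k + h) k t) (-1) 1 I ->
  Defs.C1 (2 * S h) k * I = akd_formula (2 * S h) k ->
  exists Dk : R -> R,
    nth_deriv k (fun t => (1 - t ^ 2) ^ (k + (2 * S h - 2) / 2)) Dk /\
    exists pr : Riemann_integrable (akd_integrand (2 * S h) k Dk) (-1) 1,
      Vd (2 * S h) * RiemannInt pr = akd_formula (2 * S h) k.
Proof.
  intros HI HF. rewrite half_double_pred.
  exists (one_minus_sq_pow_deriv (k + h) k). split.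
  { rewrite <- one_minus_sq_pow_deriv_0. apply (nth_deriv_one_minus_sq_pow_deriv (k + h) 0 k). }
  set (c := (-1) ^ k / 2 ^ k * (INR (fact h) / INR (fact (k + h)))).
  assert (HA : is_RInt (akd_integrand (2 * S h) k (one_minus_sq_pow_deriv (k + h) k))
                 (-1) 1 (c * I)).
  { eapply is_RInt_ext; [|apply (is_RInt_scal (V := R_NormedModule) _ _ _ c _ HI)].
    intros t Ht. rewrite Rmin_left, Rmax_right in Ht by lra.
    symmetry. apply akd_integrand_eq. exact Ht. }
  exists (ex_RInt_Reals_0 _ _ _ (ex_intro _ _ HA)).
  rewrite <- RInt_Reals, (is_RInt_unique _ _ _ _ HA), <- HF, <- Vd_normalization.
  unfold c. ring.
Qed.

Lemma akd_formula_0 h :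
  Defs.C1 (2 * S h) 0 * (wallis (S h) / (4 * INR (S h))) = akd_formula (2 * S h) 0.
Proof.
  unfold akd_formula. simpl Nat.eqb. cbv iota. rewrite half_double.
  unfold wallis. rewrite pow_add, mult_INR.
  assert (H1 : INR (S h) <> 0) by (apply not_0_INR; lia).
  assert (H2 : 2 ^ (2 * S h) <> 0) by (apply pow_nonzero; lra).
  simpl (INR 2). field. lra.
Qed.

Lemma akd_formula_1 h : Defs.C1 (2 * S h) 1 * moment_sum (1 + h) 1 = akd_formula (2 * S h) 1.
Proof.
  unfold akd_formula, moment_sum, pp. simpl Nat.eqb. cbv iota. rewrite half_double_pred.
  f_equal. symmetry. apply sumR_sum_f_R0; [lia| |].
  - intros q Hq. replace q with 0%nat by lia. simpl. ring.
  - intros q Hq. unfold C2, pp. rewrite half_double_pred, (falling_fact (2 * q) 1) by lia.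
    replace (2 * q - 1)%nat with (2 * (q - 1) + 1)%nat by lia. rewrite Kmoment_odd.
    replace (2 * (q - 1) + 3)%nat with (2 * q + 1)%nat by lia. reflexivity.
Qed.

Lemma akd_formula_even h r : let k := (2 * S r)%nat in
  Defs.C1 (2 * S h) k * moment_sum (k + h) k = akd_formula (2 * S h) k.
Proof.
  intros k. unfold akd_formula, moment_sum, pp.
  rewrite (proj2 (Nat.eqb_neq k 0)), (proj2 (Nat.eqb_neq k 1)) by (unfold k; lia).
  rewrite (proj2 (Nat.even_spec k)) by (exists (S r); reflexivity).
  rewrite half_double_pred. f_equal.
  replace ((k + 1) / 2)%nat with (S r) by (apply (Nat.div_unique _ 2 _ 1); unfold k; lia).
  symmetry. apply sumR_sum_f_R0; [unfold k; lia| |].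
  - intros q Hq. rewrite falling_lt by (unfold k; lia). simpl INR. ring.
  - intros q Hq. unfold C2, pp.
    rewrite half_double_pred, (falling_fact (2 * q) k) by (unfold k; lia).
    replace (2 * q - k)%nat with (2 * (q - S r))%nat by (unfold k; lia). rewrite Kmoment_even.
    replace (2 * (q - S r) + 2)%nat with (2 * S (q - S r))%nat by lia.
    rewrite half_double. unfold wallis, Rdiv. ring.
Qed.

(* For [k = j + 2] odd the Wallis term of [Kmoment (2q - k)] vanishes and its denominator
   [2q - j] cancels a factor of the falling factorial, leaving a polynomial of degree [k - 1]. *)
Lemma falling_Kmoment_odd r q : let j := (2 * r + 1)%nat in
  INR (falling (2 * q) (S (S j))) * Kmoment (2 * q - S (S j))
  = / 2 * ((2 * INR q - INR j - 1) * INR (falling (2 * q) j)).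
Proof.
  intros j. destruct (le_lt_dec (S (S j)) (2 * q)) as [Hq|Hq].
  - replace (2 * q - S (S j))%nat with (2 * (q - S (S r)) + 1)%nat by (unfold j; lia).
    rewrite Kmoment_odd, !falling_S_INR, S_INR.
    replace (INR (2 * (q - S (S r)) + 3)) with (INR (2 * q) - INR j)
      by (rewrite <- minus_INR by lia; f_equal; unfold j; lia).
    assert (Hne : INR (2 * q) - INR j <> 0).
    { rewrite <- minus_INR by lia. apply not_0_INR. lia. }
    rewrite mult_INR. simpl (INR 2). field. rewrite mult_INR in Hne. exact Hne.
  - rewrite falling_lt by exact Hq. simpl (INR 0).
    destruct (Nat.eq_dec (2 * q) (S j)) as [E|E].
    + assert (E' : INR (2 * q) = INR (S j)) by now rewrite E.
      rewrite mult_INR, (S_INR j) in E'. simpl (INR 2) in E'.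
      replace (2 * INR q - INR j - 1) with 0 by lra. ring.
    + rewrite falling_lt by (unfold j in *; lia). simpl (INR 0). ring.
Qed.

Lemma moment_sum_odd r h : let k := (2 * S r + 1)%nat in moment_sum (k + h) k = 0.
Proof.
  intros k. set (j := (2 * r + 1)%nat). assert (Hk : k = S (S j)) by (unfold k, j; lia).
  rewrite <- (alt_binom_sum_fdiff_null (k + h)
    (fun q => INR (falling (2 * q) k) * Kmoment (2 * q - k))).
  - unfold moment_sum, alt_binom_sum. apply sum_eq. intros q Hq. rewrite binom_C by lia. ring.
  - apply (fdiff_null_le k); [lia|].
    pose proof (fdiff_null_scal _ (/ 2) _
      (fdiff_null_mul_affine _ 2 (- INR j - 1) _ (fdiff_null_falling j))) as Hpoly.
    rewrite Hk. refine (fdiff_null_ext _ _ _ (fun q => _) Hpoly). cbv beta.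
    unfold j. rewrite falling_Kmoment_odd. ring.
Qed.

Lemma akd_formula_odd h r : let k := (2 * S r + 1)%nat in
  Defs.C1 (2 * S h) k * moment_sum (k + h) k = akd_formula (2 * S h) k.
Proof.
  intros k. unfold akd_formula.
  rewrite (proj2 (Nat.eqb_neq k 0)), (proj2 (Nat.eqb_neq k 1)) by (unfold k; lia).
  replace (Nat.even k) with false
    by (rewrite <- Nat.negb_odd, (proj2 (Nat.odd_spec k)); [reflexivity|now exists (S r)]).
  unfold k. rewrite moment_sum_odd. ring.
Qed.

Theorem mainTheorem6 (d k : nat) (hd : (2 <= d)%nat) (hev : Nat.Even d) :
  exists Dk : R -> R,
    nth_deriv k (fun t => (1 - t ^ 2) ^ (k + (d - 2) / 2)) Dk /\
    exists pr : Riemann_integrable (akd_integrand d k Dk) (-1) 1,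
      Vd d * RiemannInt pr = akd_formula d k.
Proof.
  destruct hev as [[|h] ->]; [lia|].
  destruct k as [|[|k']].
  - apply (akd_of_is_RInt h 0 (wallis (S h) / (4 * INR (S h)))); [|apply akd_formula_0].
    rewrite one_minus_sq_pow_deriv_0. apply is_RInt_Kinf_one_minus_sq_pow.
  - apply (akd_of_is_RInt h 1 _ (is_RInt_Kinf_one_minus_sq_pow_deriv _ _)), akd_formula_1.
  - destruct (Nat.Even_or_Odd k') as [[r Hr]|[r Hr]].
    + replace (S (S k')) with (2 * S r)%nat by lia.
      apply (akd_of_is_RInt h _ _ (is_RInt_Kinf_one_minus_sq_pow_deriv _ _)), akd_formula_even.
    + replace (S (S k')) with (2 * S r + 1)%nat by lia.
      apply (akd_of_is_RInt h _ _ (is_RInt_Kinf_one_minus_sq_pow_deriv _ _)), akd_formula_odd.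
Qed.
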